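(* For every integer $m\ge 4$ with $m\ne 5$, $\chi_{ei}(C_m\square C_7)=4$.
   Context: All graphs are finite and simple. $C_k$ denotes the cycle on $k$ vertices. A path $P_4$ in $G$ is a sequence $uxyv$ of four distinct vertices with $ux,xy,yv\in E(G)$; $u,v$ are its end vertices. An $e$-injective $k$-coloring of $G$ is a function $f:V(G)\to\{1,\dots,k\}$ with $f(u)\ne f(v)$ whenever $u,v$ are the end vertices of some path $P_4$ in $G$; $\chi_{ei}(G)$ is the least such $k$. In the Cartesian product $G\square H$ two vertices are adjacent if they are adjacent in one coordinate and equal in the other. *)

From mathcomp Require Import all_boot.
Set Implicit Arguments. Unset Strict Implicit. Unset Printing Implicit Defensive.

(* A simple graph on a finite vertex type T is given by an adjacency
   relation adj : rel T (assumed symmetric and irreflexive where needed). *)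

(* The cycle C_k on vertex set 'I_k (meaningful for k >= 3):
   i ~ j iff j = i+1 mod k or i = j+1 mod k. *)
Definition cycle_adj (k : nat) : rel 'I_k :=
  fun i j => (j == (i.+1 %% k) :> nat) || (i == (j.+1 %% k) :> nat).

Arguments cycle_adj : clear implicits.

Definition cart_adj (T U : finType) (g : rel T) (h : rel U) : rel (T * U) :=
  fun p q => (g p.1 q.1 && (p.2 == q.2)) || ((p.1 == q.1) && h p.2 q.2).

Definition P4_ends (T : finType) (adj : rel T) (u v : T) : bool :=
  [exists x : T, exists y : T,
     [&& uniq [:: u; x; y; v], adj u x, adj x y & adj y v]].

(* e-injective k-colouring: colours in {1..k}, represented by 'I_k. *)
Definition ei_coloring (T : finType) (adj : rel T) (k : nat) (f : T -> 'I_k) : bool :=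
  [forall u, forall v, P4_ends adj u v ==> (f u != f v)].

Definition ei_colorable (T : finType) (adj : rel T) (k : nat) : bool :=
  [exists f : {ffun T -> 'I_k}, ei_coloring adj f].

Lemma ex_ei_colorable (T : finType) (adj : rel T) :
  exists k, ei_colorable adj k.
Proof.
exists #|T|; apply/existsP; exists (finfun (@enum_rank T)).
apply/forallP => u; apply/forallP => v; apply/implyP.
move=> /existsP [x /existsP [y /and4P [Hu _ _ _]]].
rewrite !ffunE; apply/negP => /eqP /enum_rank_inj Huv; move: Hu; rewrite Huv /=.
by rewrite !inE eqxx !orbT.
Qed.

Definition chi_ei (T : finType) (adj : rel T) : nat :=
  ex_minn (ex_ei_colorable adj).

(* Lower bound: in one C_7 fibre, two vertices at cyclic distance 1 are the ends
   of a P_4 through a neighbouring fibre, and two at distance 3 are the ends of a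
   P_4 inside the fibre.  So an e-injective coloring properly colors the
   circulant C_7(1,3), whose complement is the 7-cycle C_7(2); it has no
   independent triple, and 7 vertices need more than 3 colors.

   Upper bound: the ends of a P_4 in C_m x C_7 differ by a sum of three unit
   steps, so a coloring given column by column is e-injective as soon as every
   cyclic window of four consecutive columns avoids the finitely many forbidden
   coincidences.  Across a seam a window only sees the first three columns of the
   next block, so blocks of widths 4, 6, 7 and 9 starting with the same three
   columns can be concatenated freely; these widths produce every m >= 4 but 5. *)

From mathcomp Require Import all_boot ssralg ssrnum ssrint zmodp zify.
Set Implicit Arguments. Unset Strict Implicit. Unset Printing Implicit Defensive.
Import GRing.Theory.

Lemma pigeonhole_fibre (T : finType) k n (a : T -> 'I_k) :
  k * n < #|T| -> exists c, n < #|[set x | a x == c]|.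
Proof.
move=> lt_kn_T.
case: (pickP (fun c => n < #|[set x | a x == c]|)) => [c big_c|small]; first by exists c.
have : #|T| <= k * n.
  rewrite -sum1_card (partition_big a xpredT) //= -[k in k * n]card_ord -sum_nat_const.
  by apply: leq_sum => c _; rewrite sum1dep_card leqNgt small.
by rewrite leqNgt lt_kn_T.
Qed.

Section CyclicWindows.
Variables (T : Type) (n : nat).

Definition cyclic_window (s : seq T) i := take n.+1 (drop i (s ++ take n s)).

Definition cyclic_windows (s : seq T) := [seq cyclic_window s i | i <- iota 0 (size s)].

Lemma nth_cyclic_window x0 s i k : n <= size s -> i < size s -> k <= n ->
  nth x0 (cyclic_window s i) k = nth x0 s ((i + k) %% size s).
Proof.
move=> le_n_s lt_i_s le_k_n; rewrite nth_take ?ltnS // nth_drop nth_cat.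
case: ltnP => [lt_ik_s | le_s_ik]; first by rewrite modn_small.
have -> : i + k = (i + k - size s) + size s by lia.
by rewrite addnK nth_take ?modnDr ?modn_small //; lia.
Qed.

Lemma take_eq_take j (X Y : seq T) : j <= n -> take n X = take n Y -> take j X = take j Y.
Proof. by move=> le_j_n eq_n; rewrite -(take_takel X le_j_n) eq_n take_takel. Qed.

Lemma cyclic_windows_cat s1 s2 : n <= size s1 -> take n s1 = take n s2 ->
  cyclic_windows (s1 ++ s2) = cyclic_windows s1 ++ cyclic_windows s2.
Proof.
move=> le_n_s1 eq_pre.
have le_n_s2 : n <= size s2 by rewrite -(size_takel le_n_s1) eq_pre size_take_min geq_minr.
have pre12 : take n (s1 ++ s2) = take n s2 by rewrite takel_cat.
rewrite /cyclic_windows size_cat iotaD map_cat add0n; congr (_ ++ _).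
  apply/eq_in_map => i; rewrite mem_iota add0n => /= lt_i_s1.
  rewrite /cyclic_window pre12 -catA !drop_cat lt_i_s1 take_cat [in RHS]take_cat.
  case: ltnP => // _; congr (_ ++ _); apply: take_eq_take; first by rewrite size_drop; lia.
  by rewrite takel_cat // take_takel // eq_pre.
rewrite -[X in iota X _]addn0 iotaDl -map_comp; apply/eq_map => i /=.
by rewrite /cyclic_window pre12 -catA addnC -drop_drop drop_size_cat.
Qed.

End CyclicWindows.

Local Open Scope ring_scope.

(* The elements of 'I_n.+2 listed as ring elements: unlike [enum], this list
   reduces under [vm_compute], so finite checks over Z_n can be decided by it. *)
Definition enumZp n : seq 'I_n.+2 := [seq i%:R | i <- iota 0 n.+2].

Lemma mem_enumZp n (x : 'I_n.+2) : x \in enumZp n.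
Proof. by rewrite -[x]natr_Zp map_f // mem_iota ltn_ord. Qed.

Lemma cycle_adjE n (i j : 'I_n.+2) : cycle_adj n.+2 i j = (j == i + 1) || (i == j + 1).
Proof. by rewrite /cycle_adj -!val_eqE /= !modnDmr !addn1. Qed.

Lemma val_Zp_addn n (i : 'I_n.+2) k : val (i + k%:R) = ((i + k) %% n.+2)%N.
Proof. by rewrite /= Zp_nat /= modnDmr. Qed.

Definition unit_steps : seq (int * int) := [:: (1, 0); (-1, 0); (0, 1); (0, -1)].

Definition P4_displacements : seq (int * int) :=
  [seq d + s | d <- [seq s1 + s2 | s1 <- unit_steps, s2 <- unit_steps], s <- unit_steps].

Definition forward_displacements := [seq d <- P4_displacements | 0 <= d.1].

Lemma P4_displacements_forward d : d \in P4_displacements ->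
  (d \in forward_displacements) || (- d \in forward_displacements).
Proof. by move: d; apply/allP; vm_compute. Qed.

Lemma forward_displacements_le3 d : d \in forward_displacements -> (absz d.1 <= 3)%N.
Proof. by move: d; apply/allP; vm_compute. Qed.

Section TorusDisplacements.
Variables p q : nat.
Local Notation torus := (cart_adj (cycle_adj p.+2) (cycle_adj q.+2)).

Definition torus_proj (d : int * int) : 'I_p.+2 * 'I_q.+2 := (d.1%:~R, d.2%:~R).

Lemma add_torus_projE x d : x + torus_proj d = (x.1 + d.1%:~R, x.2 + d.2%:~R).
Proof. by []. Qed.

Lemma torus_projD : {morph torus_proj : d e / d + e}.
Proof. by move=> [a b] [c d]; rewrite /torus_proj /= !intrD. Qed.

Lemma torus_projN : {morph torus_proj : d / - d}.
Proof. by move=> [a b]; rewrite /torus_proj /= !intrN. Qed.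

Lemma torus_adj_step x y : torus x y -> exists2 s, s \in unit_steps & y = x + torus_proj s.
Proof.
case: x y => [i j] [i' j']; rewrite /cart_adj /= !cycle_adjE.
case/orP => [/andP[/orP[] /eqP-> /eqP->] | /andP[/eqP-> /orP[] /eqP->]].
- by exists (1, 0); rewrite ?inE // add_torus_projE /= mulr1z mulr0z addr0.
- by exists (-1, 0); rewrite ?inE // add_torus_projE /= mulrN1z mulr0z addrK addr0.
- by exists (0, 1); rewrite ?inE // add_torus_projE /= mulr1z mulr0z addr0.
- by exists (0, -1); rewrite ?inE // add_torus_projE /= mulrN1z mulr0z addrK addr0.
Qed.

Lemma P4_ends_displacement u v :
  P4_ends torus u v -> exists2 d, d \in P4_displacements & v = u + torus_proj d.
Proof.
case/existsP => x /existsP[y /and4P[_ /torus_adj_step[s1 s1_unit ->]]].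
move=> /torus_adj_step[s2 s2_unit ->] /torus_adj_step[s3 s3_unit ->].
exists (s1 + s2 + s3); last by rewrite !torus_projD !addrA.
by apply: allpairs_f => //; apply: allpairs_f.
Qed.

Lemma ei_coloring_of_forward k (f : 'I_p.+2 * 'I_q.+2 -> 'I_k) :
  (forall x d, d \in forward_displacements -> f x != f (x + torus_proj d)) ->
  ei_coloring torus f.
Proof.
move=> separated; apply/forallP => u; apply/forallP => v; apply/implyP.
case/P4_ends_displacement => d /P4_displacements_forward /orP[fwd|bwd] ->.
  exact: separated.
set w := u + torus_proj d.
have -> : u = w + torus_proj (- d) by rewrite torus_projN addrK.
by rewrite eq_sym separated.
Qed.

End TorusDisplacements.

Section ColumnColoring.
Variables p q k : nat.

Definition cell (w : seq (seq 'I_k.+1)) (i : nat) (j : 'I_q.+2) : 'I_k.+1 :=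
  nth 0 (nth [::] w i) j.

Definition column_coloring w (x : 'I_p.+2 * 'I_q.+2) := cell w x.1 x.2.

Definition good_window (x : seq (seq 'I_k.+1)) :=
  all (fun d => all (fun j : 'I_q.+2 => cell x 0 j != cell x (absz d.1) (j + d.2%:~R))
                    (enumZp q))
      forward_displacements.

Lemma column_coloring_separated w x d :
  (3 <= p.+2)%N -> size w = p.+2 -> all good_window (cyclic_windows 3 w) ->
  d \in forward_displacements ->
  column_coloring w x != column_coloring w (x + torus_proj p q d).
Proof.
case: x => i j ge3_p2 size_w good_w fwd_d.
have d1_ge0 : 0 <= d.1 by move: fwd_d; rewrite mem_filter => /andP[].
have window_i : cyclic_window 3 w i \in cyclic_windows 3 w.
  by apply: map_f; rewrite mem_iota size_w ltn_ord.
move: good_w => /allP/(_ _ window_i)/allP/(_ d fwd_d)/allP/(_ j (mem_enumZp j)).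
rewrite /cell !nth_cyclic_window ?size_w ?forward_displacements_le3 //; try lia.
rewrite addn0 modn_small // /column_coloring /cell add_torus_projE /=.
by rewrite -val_Zp_addn pmulrn gez0_abs.
Qed.

End ColumnColoring.

Arguments good_window : clear implicits.

Lemma ei_colorable_of_columns p q k w :
  (3 <= p.+2)%N -> size w = p.+2 -> all (good_window q k) (cyclic_windows 3 w) ->
  ei_colorable (cart_adj (cycle_adj p.+2) (cycle_adj q.+2)) k.+1.
Proof.
move=> ge3_p2 size_w good_w; apply/existsP; exists [ffun x => column_coloring w x].
by apply: ei_coloring_of_forward => x d fwd_d; rewrite !ffunE column_coloring_separated.
Qed.

Definition c0 : seq 'I_4 := [:: 0; 1; 0; 1; 2; 3; 2].
Definition c1 : seq 'I_4 := [:: 1; 0; 1; 0; 3; 2; 3].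
Definition c2 : seq 'I_4 := [:: 0; 1; 0; 3; 2; 3; 1].
Definition c3 : seq 'I_4 := [:: 1; 0; 3; 2; 3; 1; 0].
Definition c4 : seq 'I_4 := [:: 2; 3; 2; 3; 1; 0; 1].
Definition c5 : seq 'I_4 := [:: 3; 2; 3; 1; 0; 1; 2].
Definition c6 : seq 'I_4 := [:: 2; 3; 1; 0; 1; 2; 3].

Definition admissible (w : seq (seq 'I_4)) :=
  (take 3 w == [:: c0; c1; c2]) && all (good_window 5 3) (cyclic_windows 3 w).

Lemma admissible_cat w1 w2 : admissible w1 -> admissible w2 -> admissible (w1 ++ w2).
Proof.
case/andP => /eqP pre1 good1 /andP[/eqP pre2 good2].
have le3_w1 : (3 <= size w1)%N by have := congr1 size pre1; rewrite size_take_min /=; lia.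
by rewrite /admissible takel_cat // pre1 eqxx cyclic_windows_cat ?pre1 ?pre2 // all_cat good1 good2.
Qed.

Lemma admissible_blocks :
  [/\ admissible [:: c0; c1; c2; c1], admissible [:: c0; c1; c2; c1; c0; c1],
      admissible [:: c0; c1; c2; c3; c4; c5; c6]
    & admissible [:: c0; c1; c2; c1; c2; c3; c4; c5; c6]].
Proof. by split; vm_compute. Qed.

Lemma exists_admissible m : (4 <= m)%N -> m != 5 -> exists2 w, size w = m & admissible w.
Proof.
have [B4 B6 B7 B9] := admissible_blocks.
elim/ltn_ind: m => m IH m_ge4 m_neq5.
case: (boolP [|| m == 4, m == 6, m == 7 | m == 9]%N) => [/or4P[] /eqP-> | not_base].
- by exists [:: c0; c1; c2; c1]; last exact: B4.
- by exists [:: c0; c1; c2; c1; c0; c1]; last exact: B6.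
- by exists [:: c0; c1; c2; c3; c4; c5; c6]; last exact: B7.
- by exists [:: c0; c1; c2; c1; c2; c3; c4; c5; c6]; last exact: B9.
have [|||w size_w adm_w] := IH (m - 4)%N; try lia.
exists ([:: c0; c1; c2; c1] ++ w); last exact: admissible_cat B4 adm_w.
by rewrite size_cat size_w /=; lia.
Qed.

Lemma C7_13_no_independent_triple (x y z : 'I_7) :
  [&& x != y, y != z & z != x] ->
  exists2 u, u \in [:: x; y; z] & exists2 v, v \in [:: x; y; z] & (v == u + 1) || (v == u + 3).
Proof.
have : all (fun x => all (fun y => all (fun z => [&& x != y, y != z & z != x] ==>
    has (fun u => has (fun v => (v == u + 1) || (v == u + 3)) [:: x; y; z]) [:: x; y; z])
  (enumZp 5)) (enumZp 5)) (enumZp 5) by vm_compute.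
move=> /allP/(_ x (mem_enumZp x))/allP/(_ y (mem_enumZp y))/allP/(_ z (mem_enumZp z)).
move=> /implyP triple /triple /hasP[u xyz_u /hasP[v xyz_v uv]].
by exists u => //; exists v.
Qed.

Lemma C7_13_not_3_colorable k (a : 'I_7 -> 'I_k) :
  (k < 4)%N -> exists x, (a x == a (x + 1)) || (a x == a (x + 3)).
Proof.
move=> lt_k4; have [c /card_gt2P[x [y [z [[xc yc zc] [xy yz zx]]]]]] :
    exists c, (2 < #|[set x | a x == c]|)%N.
  by apply: pigeonhole_fibre; rewrite card_ord; lia.
have color_c w : w \in [:: x; y; z] -> a w = c.
  by move: xc yc zc; rewrite !inE => /eqP ? /eqP ? /eqP ? /or3P[] /eqP->.
have [u xyz_u [v xyz_v uv]] := C7_13_no_independent_triple (introT and3P (And3 xy yz zx)).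
by exists u; case/orP: uv => /eqP <-; rewrite (color_c u xyz_u) (color_c v xyz_v) eqxx ?orbT.
Qed.

Section LowerBound.
Variable p : nat.
Local Notation torus := (cart_adj (cycle_adj p.+2) (cycle_adj 7)).

Lemma P4_ends_square (x : 'I_7) : P4_ends torus (0, x) (0, x + 1).
Proof.
apply/existsP; exists (1, x); apply/existsP; exists (1, x + 1).
have x_neq_x1 : x != x + 1 by move: x (mem_enumZp x); apply/allP; vm_compute.
rewrite /= !inE !xpair_eqE /cart_adj /= !cycle_adjE (negbTE x_neq_x1).
by rewrite add0r !eqxx /= !orbT.
Qed.

Lemma P4_ends_column (x : 'I_7) : P4_ends torus (0, x) (0, x + 3).
Proof.
apply/existsP; exists (0, x + 1); apply/existsP; exists (0, x + 2).
have uniq_x : uniq [:: x; x + 1; x + 2; x + 3] by move: x (mem_enumZp x); apply/allP; vm_compute.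
move: uniq_x; rewrite /= !inE !xpair_eqE /cart_adj /= !cycle_adjE !eqxx /= -!addrA => ->.
by rewrite -[2 : 'I_7]/(1 + 1) -[3 : 'I_7]/(1 + (1 + 1)) !eqxx.
Qed.

Lemma torus_not_ei_colorable k : (k < 4)%N -> ~~ ei_colorable torus k.
Proof.
move=> lt_k4; apply/negP => /existsP[f /forallP f_ei].
have separated u v : P4_ends torus u v -> f u != f v.
  by move: (f_ei u) => /forallP/(_ v)/implyP.
have [x /orP[] /eqP same] := C7_13_not_3_colorable (fun j => f (0, j)) lt_k4.
- by move: (separated _ _ (P4_ends_square x)); rewrite same eqxx.
- by move: (separated _ _ (P4_ends_column x)); rewrite same eqxx.
Qed.

End LowerBound.

Local Close Scope ring_scope.

Theorem theorem4p9 (m : nat) :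
  4 <= m -> m != 5 ->
  chi_ei (cart_adj (cycle_adj m) (cycle_adj 7)) = 4.
Proof.
move=> m_ge4 m_neq5; have [w size_w /andP[_ good_w]] := exists_admissible m_ge4 m_neq5.
have [p def_m] : exists p, m = p.+2 by exists m.-2; lia.
rewrite def_m in m_ge4 size_w *; rewrite /chi_ei; case: ex_minnP => k col_k min_k.
apply/eqP; rewrite eqn_leq min_k /=.
  by rewrite leqNgt; apply: contraL col_k; apply: torus_not_ei_colorable.
exact: ei_colorable_of_columns (ltnW m_ge4) size_w good_w.
Qed.
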